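(* Let $L$ be a real vector space endowed with a vector preorder $\le$ (a preorder compatible with addition and multiplication by nonnegative scalars), let $C\subset L$ be a linear subspace and $M\subset C$ a nonempty linear subspace such that $C$ is exhaustive (for every $X\in L$ there is $X_0\in C$ with $X_0\ge X$). Let $H\colon C\to\mathbb{R}$ be a convex premium principle, let $L'_+$ be the set of all monotone linear functionals $\mu\colon L\to\mathbb{R}$, and for $\mu\in L'_+$ let $H^*(\mu):=\sup_{X\in C}(\mu(X)-H(X))\in[0,\infty]$. Let $R_{\mathrm{Max}}(X):=\inf\{H(X_0)\mid X_0\in C,\ X_0\ge X\}$ for $X\in L$. Then $$R_{\mathrm{Max}}(X)=\max_{\mu\in L'_+}\big(\mu(X)-H^*(\mu)\big)\quad\text{for all }X\in L,$$ $$H^*(\mu)=\sup_{X\in L}\big(\mu(X)-R_{\mathrm{Max}}(X)\big)\quad\text{for all }\mu\in L'_+,$$ and $H^*(\mu)<\infty$ implies $\mu(m)=H(m)$ for all $m\in M$.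
   Context: A premium principle is a map $H\colon C\to\mathbb{R}$ with (P1') $H(X+m)=H(X)+H(m)$ for all $X\in C$, $m\in M$; (P2') $H(0)=0$ and $H(X)\ge0$ for all $X\in C$ with $X\ge0$; (P3') $\inf\{H(X_0)\mid X_0\in C,\ X_0\ge X\}>-\infty$ for all $X\in L$. Convex means $H(\lambda X+(1-\lambda)Y)\le\lambda H(X)+(1-\lambda)H(Y)$ for $X,Y\in C$, $\lambda\in[0,1]$. A linear functional $\mu$ is monotone if $\mu(X)\le\mu(Y)$ whenever $X\le Y$. *)

From HB Require Import structures.
From mathcomp Require Import all_boot all_order all_algebra.
From mathcomp Require Import all_classical all_reals ereal.
Set Implicit Arguments. Unset Strict Implicit. Unset Printing Implicit Defensive.
Import Order.TTheory GRing.Theory Num.Theory.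
Local Open Scope classical_set_scope.
Local Open Scope ring_scope.

Section Defs.
Variables (R : realType) (L : lmodType R).

Definition vector_preorder (le : L -> L -> Prop) : Prop :=
  [/\ forall X, le X X,
      forall X Y Z, le X Y -> le Y Z -> le X Z,
      forall X Y Z, le X Y -> le (X + Z) (Y + Z)
    & forall (a : R) X Y, 0 <= a -> le X Y -> le (a *: X) (a *: Y)].

Definition is_subspace (S : set L) : Prop :=
  S 0 /\ forall (a : R) x y, S x -> S y -> S (a *: x + y).

Definition exhaustive (le : L -> L -> Prop) (C : set L) : Prop :=
  forall X, exists X0, C X0 /\ le X X0.

Definition RMax (le : L -> L -> Prop) (C : set L) (H : L -> R) (X : L) : \bar R :=
  ereal_inf [set (H X0)%:E | X0 in [set X0 | C X0 /\ le X X0]].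

(* premium principle H : C -> R (values of H outside C are irrelevant) *)
Definition premium_principle (le : L -> L -> Prop) (C M : set L) (H : L -> R) : Prop :=
  [/\ forall X m, C X -> M m -> H (X + m) = H X + H m,
      H 0 = 0,
      forall X, C X -> le 0 X -> 0 <= H X
    & forall X, (-oo < RMax le C H X)%E].

Definition convex_on (C : set L) (H : L -> R) : Prop :=
  forall X Y (l : R), C X -> C Y -> 0 <= l <= 1 ->
    H (l *: X + (1 - l) *: Y) <= l * H X + (1 - l) * H Y.

Definition linear_functional (mu : L -> R) : Prop :=
  forall (a : R) x y, mu (a *: x + y) = a * mu x + mu y.

Definition monotone (le : L -> L -> Prop) (mu : L -> R) : Prop :=
  forall X Y, le X Y -> mu X <= mu Y.

Definition monotone_linear (le : L -> L -> Prop) (mu : L -> R) : Prop :=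
  linear_functional mu /\ monotone le mu.

Definition Hstar (C : set L) (H : L -> R) (mu : L -> R) : \bar R :=
  ereal_sup [set (mu X - H X)%:E | X in C].

End Defs.

(* R_Max is real-valued (by (P3') and exhaustiveness), monotone, and convex,
   since convexity of H passes to the infimum over dominating X0.  An algebraic
   Hahn-Banach argument (Zorn's lemma on dominated linear functionals defined on
   subspaces) gives R_Max a linear subgradient mu at every X.  Monotonicity of
   R_Max makes mu monotone, and as R_Max <= H on C the subgradient inequality
   bounds H^*(mu) by mu(X) - R_Max(X).  Conversely mu(X) - H^*(mu) <= H(X0) for
   every X0 >= X in C and every monotone mu; this gives the maximum and also
   identifies H^* as the conjugate of R_Max.  Finally, on M the premium H is
   additive, so n (mu(m) - H(m)) <= H^*(mu) for all n, forcing mu(m) <= H(m),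
   and the same for -m. *)

From HB Require Import structures.
From mathcomp Require Import all_boot all_order all_algebra.
From mathcomp Require Import all_classical all_reals ereal.
From mathcomp Require Import ring lra.
Set Implicit Arguments. Unset Strict Implicit. Unset Printing Implicit Defensive.
Import Order.TTheory GRing.Theory Num.Theory.
Local Open Scope classical_set_scope.
Local Open Scope ring_scope.

Section LinearPreliminaries.
Variables (R : realType) (L : lmodType R).

Lemma subspace0 (S : set L) : is_subspace S -> S 0.
Proof. by case. Qed.

Lemma subspaceZ (S : set L) a x : is_subspace S -> S x -> S (a *: x).
Proof. by move=> [S0 SD] Sx; rewrite -[a *: x]addr0; apply: SD. Qed.

Lemma subspaceN (S : set L) x : is_subspace S -> S x -> S (- x).
Proof. by rewrite -scaleN1r; apply: subspaceZ. Qed.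

Lemma subspace_comb (S : set L) a b x y :
  is_subspace S -> S x -> S y -> S (a *: x + b *: y).
Proof. by move=> hS Sx Sy; case: (hS) => _ SD; apply: SD => //; apply: subspaceZ. Qed.

Variable mu : L -> R.
Hypothesis mu_lin : linear_functional mu.

Lemma linear_functional0 : mu 0 = 0.
Proof. by have := mu_lin 1 0 0; rewrite scale1r addr0 mul1r; lra. Qed.

Lemma linear_functionalZ a x : mu (a *: x) = a * mu x.
Proof. by rewrite -[a *: x]addr0 mu_lin linear_functional0 addr0. Qed.

Lemma linear_functionalB x y : mu (x - y) = mu x - mu y.
Proof. by rewrite addrC -scaleN1r mu_lin mulN1r addrC. Qed.

End LinearPreliminaries.

Section HahnBanach.
Variables (R : realType) (L : lmodType R) (F : L -> R).
Hypotheses (F_convex : convex_on setT F) (F0_ge0 : 0 <= F 0).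

(* A linear functional on a subspace, dominated by [F], encoded by its graph.
   The empty graph qualifies, so that the union of the empty chain does too. *)
Definition dominated_graph (G : set (L * R)) : Prop :=
  [/\ forall a x y r s, G (x, r) -> G (y, s) -> G (a *: x + y, a * r + s),
      forall x r s, G (x, r) -> G (x, s) -> r = s
    & forall x r, G (x, r) -> r <= F x].

Section DominatedGraph.
Variable G : set (L * R).
Hypothesis gG : dominated_graph G.

Lemma dominated_graph0 x r : G (x, r) -> G (0, 0).
Proof.
case: gG => closed _ _ Gxr; have := closed (-1) _ _ _ _ Gxr Gxr.
by rewrite scaleN1r mulN1r !addNr.
Qed.

Lemma dominated_graphZ a x r : G (x, r) -> G (a *: x, a * r).
Proof.
case: gG => closed _ _ Gxr; have := closed a _ _ _ _ Gxr (dominated_graph0 Gxr).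
by rewrite !addr0.
Qed.

Lemma dominated_graph_slope v x r y s a b : G (x, r) -> G (y, s) -> 0 < a -> 0 < b ->
  (r - F (x - a *: v)) / a <= (F (y + b *: v) - s) / b.
Proof.
case: gG => closed _ dom Gxr Gys a_gt0 b_gt0.
pose l := a / (a + b). (* the weight for which the [v]-components cancel *)
have l01 : 0 <= l <= 1 by apply/andP; split; rewrite /l ?divr_ge0 ?ler_pdivrMr //; lra.
have Gmid : G (l *: y + (1 - l) *: x, l * s + (1 - l) * r).
  exact/closed/dominated_graphZ.
have mid : l *: (y + b *: v) + (1 - l) *: (x - a *: v) = l *: y + (1 - l) *: x.
  rewrite !scalerDr !scalerN !scalerA addrACA.
  have -> : (1 - l) * a = l * b by rewrite /l; field; lra.
  by rewrite subrr addr0.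
have := @F_convex (y + b *: v) (x - a *: v) l I I l01; rewrite mid.
move=> /(le_trans (dom _ _ Gmid)) /(ler_wpM2l (ltW (addr_gt0 a_gt0 b_gt0))).
have clear_l p q : (a + b) * (l * p + (1 - l) * q) = a * p + b * q.
  by rewrite /l; field; lra.
rewrite !clear_l ler_pdivlMr // mulrAC ler_pdivrMr //.
nra.
Qed.

End DominatedGraph.

Lemma dominated_extension_value G v : dominated_graph G -> G (0, 0) ->
  exists c, forall x r t, G (x, r) -> r + t * c <= F (x + t *: v).
Proof.
move=> gG G00; case: (gG) => _ _ dom.
pose S := [set c | exists x r a, [/\ G (x, r), 0 < a & c = (r - F (x - a *: v)) / a]].
have S_sup : has_sup S.
  split; first by exists ((0 - F (0 - 1 *: v)) / 1), 0, 0, 1.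
  exists ((F (0 + 1 *: v) - 0) / 1) => _ [x [r [a [Gxr a_gt0 ->]]]].
  exact: (dominated_graph_slope gG v Gxr G00 a_gt0 ltr01).
exists (sup S) => x r t Gxr; have [t_lt0|t_gt0|->] := ltgtP t 0.
- have : (r - F (x - (- t) *: v)) / (- t) <= sup S.
    by apply: sup_upper_bound => //; exists x, r, (- t); rewrite oppr_gt0.
  by rewrite scaleNr opprK ler_pdivrMr ?oppr_gt0 //; lra.
- have : sup S <= (F (x + t *: v) - r) / t.
    apply: ge_sup; first by case: S_sup.
    move=> _ [y [s [a [Gys a_gt0 ->]]]].
    exact: (dominated_graph_slope gG v Gys Gxr a_gt0 t_gt0).
  by rewrite ler_pdivlMr //; lra.
- by rewrite mul0r addr0 scale0r addr0; exact: dom.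
Qed.

Lemma dominated_graph_extend G v : dominated_graph G -> G !=set0 ->
  ~ (exists r, G (v, r)) -> exists2 G', dominated_graph G' & G `<` G'.
Proof.
move=> gG [[x0 r0] Gx0]; have G00 := dominated_graph0 gG Gx0.
have [c dom_c] := dominated_extension_value v gG G00.
case: (gG) => closed functional _ Gv.
pose G' := [set (p.1 + t *: v, p.2 + t * c) | p in G & t in [set: R]].
exists G'; last first.
  split; first by move=> [x r] Gxr; exists (x, r) => //; exists 0; rewrite ?scale0r ?mul0r ?addr0.
  move=> /(_ (v, c)) G'v; apply: Gv; exists c; apply: G'v.
  by exists (0, 0) => //; exists 1; rewrite ?scale1r ?mul1r ?add0r.
split.
- move=> a _ _ _ _ [[x r] Gxr [t _ [<- <-]]] [[y s] Gys [u _ [<- <-]]].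
  exists (a *: x + y, a * r + s); first exact: closed.
  exists (a * t + u) => //=; congr pair; last by ring.
  by rewrite scalerDr scalerA scalerDl addrACA.
- move=> _ _ z [[x r] Gxr [t _ [<- <-]]] [[y s] Gys [u _ [/= eq_yx <-]]].
  have eq_ut : u = t.
    apply: contra_notP Gv => /eqP u_neq_t; exists ((u - t)^-1 * (r - s)).
    have Gxy : G (x - y, r - s).
      by have := closed (-1) _ _ _ _ Gys Gxr; rewrite scaleN1r mulN1r ![- _ + _]addrC.
    have -> : v = (u - t)^-1 *: (x - y).
      have -> : x = y + u *: v - t *: v by rewrite eq_yx addrK.
      by rewrite addrAC [y + _]addrC addrK -scalerBl scalerA mulVf ?scale1r ?subr_eq0.
    exact: dominated_graphZ.
  move: eq_yx; rewrite eq_ut => /addIr eq_yx; rewrite eq_yx in Gys.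
  by rewrite (functional _ _ _ Gxr Gys).
- by move=> _ _ [[x r] Gxr [t _ [<- <-]]]; exact: dom_c.
Qed.

Lemma dominated_graph_bigcup (Gs : set (set (L * R))) :
  Gs `<=` dominated_graph -> total_on Gs subset ->
  dominated_graph (\bigcup_(G in Gs) G).
Proof.
move=> Gs_dom Gs_total.
have common p q : (\bigcup_(G in Gs) G) p -> (\bigcup_(G in Gs) G) q ->
    exists2 G, Gs G & G p /\ G q.
  move=> [G1 GsG1 G1p] [G2 GsG2 G2q].
  have [G12|G21] := Gs_total _ _ GsG1 GsG2.
  - by exists G2 => //; split => //; exact: G12.
  - by exists G1 => //; split => //; exact: G21.
split.
- move=> a x y r s Uxr Uys; have [G GsG [Gxr Gys]] := common _ _ Uxr Uys.
  by exists G => //; case: (Gs_dom _ GsG) => closed _ _; exact: closed.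
- move=> x r s Uxr Uxs; have [G GsG [Gxr Gxs]] := common _ _ Uxr Uxs.
  by case: (Gs_dom _ GsG) => _ functional _; exact: functional Gxr Gxs.
- by move=> x r [G GsG Gxr]; case: (Gs_dom _ GsG) => _ _ dom; exact: dom.
Qed.

Lemma dominated_graph_set1 : dominated_graph [set (0, 0)].
Proof.
split; first by move=> a x y r s [-> ->] [-> ->]; rewrite scaler0 mulr0 !addr0.
  by move=> x r s [_ ->] [_ ->].
by move=> x r [-> ->].
Qed.

Theorem hahn_banach_convex :
  exists2 mu : L -> R, linear_functional mu & forall x, mu x <= F x.
Proof.
have [G [gG G_max]] := Zorn_bigcup dominated_graph_bigcup.
have G_neq0 : G !=set0.
  apply: contrapT => G0; apply: (G_max _ _ dominated_graph_set1); split.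
    by move=> p Gp; case: G0; exists p.
  by move=> /(_ (0, 0) erefl) G00; apply: G0; exists (0, 0).
have G_total x : exists r, G (x, r).
  apply: contrapT => Gx; have [G' gG' GG'] := dominated_graph_extend gG G_neq0 Gx.
  exact: G_max GG' gG'.
have [mu G_mu] := choice G_total.
case: gG => closed functional dom; exists mu; last by move=> x; exact: dom.
by move=> a x y; exact: functional (G_mu (a *: x + y)) (closed _ _ _ _ _ (G_mu x) (G_mu y)).
Qed.

End HahnBanach.

Lemma convex_subgradient (R : realType) (L : lmodType R) (f : L -> R) X :
  convex_on setT f ->
  exists2 mu : L -> R, linear_functional mu & forall Y, f X + mu (Y - X) <= f Y.
Proof.
move=> f_convex; pose F h := f (X + h) - f X.
have F_convex : convex_on setT F.
  move=> a b l _ _ l01; rewrite /F.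
  have -> : X + (l *: a + (1 - l) *: b) = l *: (X + a) + (1 - l) *: (X + b).
    by rewrite !scalerDr addrACA -scalerDl [l + _]addrC subrK scale1r.
  have := @f_convex (X + a) (X + b) l I I l01; lra.
have [|mu mu_lin mu_le] := hahn_banach_convex F_convex; first by rewrite /F addr0 subrr.
by exists mu => // Y; have := mu_le (Y - X); rewrite /F subrKC; lra.
Qed.

Lemma natmul_bounded_le0 (R : realType) (a r : R) : (forall n : nat, n%:R * a <= r) -> a <= 0.
Proof.
move=> bounded; rewrite leNgt; apply/negP => a_gt0.
have r_ge0 : 0 <= r by have := bounded 0%N; rewrite mul0r.
have := archi_boundP (divr_ge0 r_ge0 (ltW a_gt0)); rewrite ltr_pdivrMr //.
by have := bounded (Num.bound (r / a)); lra.
Qed.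

Section VectorPreorder.
Variables (R : realType) (L : lmodType R) (le : L -> L -> Prop).
Hypothesis le_vp : vector_preorder le.

Lemma vp_refl X : le X X.
Proof. by case: le_vp. Qed.

Lemma vp_trans X Y Z : le X Y -> le Y Z -> le X Z.
Proof. by case: le_vp => _ trans _ _; exact: trans. Qed.

Lemma vp_addr Z X Y : le X Y -> le (X + Z) (Y + Z).
Proof. by case: le_vp => _ _ addr _; exact: addr. Qed.

Lemma vp_nneg_comb a b X X0 Y Y0 : 0 <= a -> 0 <= b -> le X X0 -> le Y Y0 ->
  le (a *: X + b *: Y) (a *: X0 + b *: Y0).
Proof.
case: le_vp => _ _ _ scale a_ge0 b_ge0 XX0 YY0.
apply: (vp_trans (Y := a *: X0 + b *: Y)); first exact/vp_addr/scale.
by rewrite ![a *: X0 + _]addrC; exact/vp_addr/scale.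
Qed.

End VectorPreorder.

Section MaximalRiskMeasure.
Variables (R : realType) (L : lmodType R) (le : L -> L -> Prop) (C M : set L) (H : L -> R).
Hypotheses (le_vp : vector_preorder le) (C_sub : is_subspace C) (M_sub : is_subspace M)
  (MC : M `<=` C) (C_exh : exhaustive le C) (H_prem : premium_principle le C M H)
  (H_convex : convex_on C H).

Let rmax X := fine (RMax le C H X).

Lemma RMax_le X X0 : C X0 -> le X X0 -> (RMax le C H X <= (H X0)%:E)%E.
Proof. by move=> CX0 XX0; apply: ereal_inf_lbound; exists X0. Qed.

Lemma RMaxE X : RMax le C H X = (rmax X)%:E.
Proof.
have [X0 [CX0 XX0]] := C_exh X; case: H_prem => _ _ _ /(_ X) RMax_gtNy.
rewrite /rmax fineK // fin_numElt RMax_gtNy /=.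
exact: le_lt_trans (RMax_le CX0 XX0) (ltry _).
Qed.

Lemma rmax_le X X0 : C X0 -> le X X0 -> rmax X <= H X0.
Proof. by move=> CX0 XX0; rewrite -lee_fin -RMaxE; exact: RMax_le. Qed.

Lemma rmax_approx X e : 0 < e -> exists X0, [/\ C X0, le X X0 & H X0 < rmax X + e].
Proof.
move=> e_gt0; have RMax_fin : RMax le C H X \is a fin_num by rewrite RMaxE.
have [_ [X0 [CX0 XX0] <-]] := lb_ereal_inf_adherent e_gt0 RMax_fin.
by rewrite -/(RMax le C H X) RMaxE -EFinD lte_fin => HX0; exists X0.
Qed.

Lemma rmax_monotone X Y : le X Y -> rmax X <= rmax Y.
Proof.
move=> XY; rewrite -lee_fin -!RMaxE; apply: ereal_inf_le_tmp => _ [Y0 [CY0 YY0] <-].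
by exists Y0 => //; split => //; exact: vp_trans XY YY0.
Qed.

Lemma rmax_convex : convex_on setT rmax.
Proof.
move=> X Y l _ _ l01; have /andP[l_ge0 l_le1] := l01; apply/ler_addgt0Pr => e e_gt0.
have [X0 [CX0 XX0 HX0]] := rmax_approx X e_gt0.
have [Y0 [CY0 YY0 HY0]] := rmax_approx Y e_gt0.
have l'_ge0 : 0 <= 1 - l by lra.
have := rmax_le (subspace_comb l (1 - l) C_sub CX0 CY0)
  (vp_nneg_comb le_vp l_ge0 l'_ge0 XX0 YY0).
have := H_convex CX0 CY0 l01.
nra.
Qed.

Lemma Hstar_ge0 mu : linear_functional mu -> (0 <= Hstar C H mu)%E.
Proof.
move=> mu_lin; apply: ereal_sup_ubound; exists 0; first exact: subspace0.
by case: H_prem => _ H0 _ _; rewrite linear_functional0 // H0 subrr.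
Qed.

Lemma RMax_ge_dual mu X : monotone_linear le mu ->
  ((mu X)%:E - Hstar C H mu <= RMax le C H X)%E.
Proof.
move=> [_ mu_mono]; apply: le_ereal_inf_tmp => _ [X0 [CX0 XX0] <-].
rewrite lee_subel_addr //; apply: (@le_trans _ _ (mu X0)%:E).
  by rewrite lee_fin; exact: mu_mono.
have -> : mu X0 = H X0 + (mu X0 - H X0) by rewrite addrC subrK.
by rewrite EFinD leeD2l //; apply: ereal_sup_ubound; exists X0.
Qed.

Lemma RMax_dual_attained X : exists2 mu : L -> R, monotone_linear le mu &
  RMax le C H X = ((mu X)%:E - Hstar C H mu)%E.
Proof.
have [mu mu_lin mu_sub] := convex_subgradient X rmax_convex.
have mu_mono : monotone le mu.
  move=> Y Z YZ; have XYZ : le (X + (Y - Z)) X.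
    by have := vp_addr le_vp (X - Z) YZ; rewrite subrKC addrCA.
  have := rmax_monotone XYZ; have := mu_sub (X + (Y - Z)).
  rewrite addrAC subrr add0r linear_functionalB //; lra.
have Hstar_le : (Hstar C H mu <= (mu X - rmax X)%:E)%E.
  apply: ge_ereal_sup => _ [Z CZ <-]; rewrite lee_fin.
  have := rmax_le CZ (vp_refl le_vp Z); have := mu_sub Z.
  rewrite linear_functionalB //; lra.
exists mu => //; apply/le_anti/andP; split; last exact: RMax_ge_dual.
have Hstar_fin : Hstar C H mu \is a fin_num.
  by rewrite ge0_fin_numE ?Hstar_ge0 // (le_lt_trans Hstar_le) ?ltry.
rewrite RMaxE -(fineK Hstar_fin) -EFinB lee_fin.
by move: Hstar_le; rewrite -(fineK Hstar_fin) lee_fin; lra.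
Qed.

Lemma Hstar_conjugate_RMax mu : monotone_linear le mu ->
  Hstar C H mu = ereal_sup [set ((mu X)%:E - RMax le C H X)%E | X in [set: L]].
Proof.
move=> mu_ml; apply/le_anti/andP; split.
  apply: ge_ereal_sup => _ [Z CZ <-]; apply: le_ereal_sup_tmp.
  exists ((mu Z)%:E - RMax le C H Z)%E; first by exists Z.
  by rewrite RMaxE -EFinB lee_fin lerD2l lerN2; exact: rmax_le (vp_refl le_vp Z).
apply: ge_ereal_sup => _ [X _ <-]; have := RMax_ge_dual X mu_ml.
by rewrite RMaxE lee_subel_addr // leeBlDr // addeC.
Qed.

Lemma premium_natZ m n : M m -> H (n%:R *: m) = n%:R * H m.
Proof.
case: H_prem => H_add H0 _ _ Mm; elim: n => [|n IHn]; first by rewrite !mul0r scale0r.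
rewrite -addn1 natrD scalerDl scale1r H_add ?IHn ?mulrDl ?mul1r //.
exact: MC (subspaceZ _ M_sub Mm).
Qed.

Lemma premiumN m : M m -> H (- m) = - H m.
Proof.
case: H_prem => H_add H0 _ _ Mm; have := H_add (- m) m (MC (subspaceN M_sub Mm)) Mm.
by rewrite addNr H0; lra.
Qed.

Lemma Hstar_lty_eq_on_M mu : monotone_linear le mu -> (Hstar C H mu < +oo)%E ->
  forall m, M m -> mu m = H m.
Proof.
move=> [mu_lin _] Hstar_lty.
have Hstar_fin : Hstar C H mu \is a fin_num by rewrite ge0_fin_numE ?Hstar_ge0.
have gap_le0 m : M m -> mu m - H m <= 0.
  move=> Mm; apply: (@natmul_bounded_le0 _ _ (fine (Hstar C H mu))) => n.
  rewrite -lee_fin fineK //; apply: ereal_sup_ubound; exists (n%:R *: m).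
    exact: MC (subspaceZ _ M_sub Mm).
  by rewrite linear_functionalZ // premium_natZ // mulrBr.
move=> m Mm; have := gap_le0 _ (subspaceN M_sub Mm).
rewrite premiumN // -scaleN1r linear_functionalZ // mulN1r.
by have := gap_le0 _ Mm; lra.
Qed.

End MaximalRiskMeasure.

Theorem theorem4p8 (R : realType) (L : lmodType R) (le : L -> L -> Prop)
  (C M : set L) (H : L -> R) :
  vector_preorder le ->
  is_subspace C -> is_subspace M -> M `<=` C -> M !=set0 ->
  exhaustive le C ->
  premium_principle le C M H -> convex_on C H ->
  [/\ (forall X : L,
         (exists2 mu : L -> R, monotone_linear le mu &
            RMax le C H X = ((mu X)%:E - Hstar C H mu)%E) /\
         (forall mu : L -> R, monotone_linear le mu ->
            ((mu X)%:E - Hstar C H mu <= RMax le C H X)%E)),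
      (forall mu : L -> R, monotone_linear le mu ->
         Hstar C H mu = ereal_sup [set ((mu X)%:E - RMax le C H X)%E | X in [set: L]])
    & (forall mu : L -> R, monotone_linear le mu ->
         (Hstar C H mu < +oo)%E -> forall m, M m -> mu m = H m)].
Proof.
(* [M !=set0] already follows from [is_subspace M]. *)
move=> le_vp C_sub M_sub MC _ C_exh H_prem H_convex; split.
- move=> X; split; last by move=> mu; exact: RMax_ge_dual.
  exact: RMax_dual_attained le_vp C_sub C_exh H_prem H_convex X.
- by move=> mu; exact: Hstar_conjugate_RMax le_vp C_exh H_prem mu.
- by move=> mu; exact: Hstar_lty_eq_on_M C_sub M_sub MC H_prem mu.
Qed.
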